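(* Let $B_1$ and $B_2$ be $m$-level rook equivalent singleton boards, both written with $n$ columns, such that $\{B_1,B_2\}$ is an edge of the $m$-level rook equivalence graph. Then the $m$-level root vectors $\xi_m(B_1)$ and $\xi_m(B_2)$ differ only in two positions, whose entries are swapped. That is, if $\xi_m(B_1)=\langle z_1,\ldots,z_{i_1},\ldots,z_{i_2},\ldots,z_n\rangle$ then $\xi_m(B_2)=\langle z_1,\ldots,z_{i_2},\ldots,z_{i_1},\ldots,z_n\rangle$ for some $1\le i_1<i_2\le n$ with $z_{i_1}\ne z_{i_2}$.
   Context: Fix an integer $m>0$. A Ferrers board is given by a weakly increasing sequence of non-negative integers $B=(b_1,\ldots,b_n)$ of column heights (cells in column $i$, rows $1,\ldots,b_i$, of the first quadrant); prepending height-$0$ columns on the left does not change the board, and boards are compared with the same number of columns by such padding. The rows are partitioned into levels: level $t$ consists of rows $(t-1)m+1,\ldots,tm$. An $m$-level rook placement of $k$ rooks is a set of $k$ cells of $B$, no two in the same level or the same column; $r_{k,m}(B)$ is their number, and two boards are $m$-level rook equivalent if they have equal $r_{k,m}$ for all $k\ge0$. For an integer $o$, $\lfloor o\rfloor_m$ is the largest multiple of $m$ that is $\le o$. $B$ is singleton if for each $i<n$, $b_i-\lfloor b_i\rfloor_m\ne0$ implies $\lfloor b_i\rfloor_m<\lfloor b_{i+1}\rfloor_m$. The $m$-level root vector of $B$ is $\xi_m(B)=\langle 0-b_1,m-b_2,\ldots,m(n-1)-b_n\rangle$. The $m$-level rook equivalence graph of the class of a singleton board $B$ has as vertices all singleton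 boards $m$-level rook equivalent to $B$, and $\{B_1,B_2\}$ is an edge iff, written with the same number of columns, $B_1$ and $B_2$ differ in exactly two columns $i,j$, where $B_1$ has $k$ more cells than $B_2$ in column $i$ and $k$ fewer in column $j$, for some $k>0$. *)

From mathcomp Require Import all_boot all_order all_algebra.
Unset Printing Implicit Defensive.

(* A Ferrers board: the sequence of column heights b_1..b_n (0-based in Rocq),
   weakly increasing. *)
Definition ferrers (B : seq nat) : bool := sorted leq B.

(* maximal column height: rows are indexed 0..maxh B - 1 (row r = paper row r+1) *)
Definition maxh (B : seq nat) : nat := foldr maxn 0 B.

(* cells (i, r) with column i (0-based) and row r (0-based, paper row r+1) *)
Definition cell_in (B : seq nat) (c : 'I_(size B) * 'I_(maxh B)) : bool :=
  (c.2 < nth 0 B c.1)%N.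

(* level of a 0-based row r : paper level t contains rows (t-1)m+1..tm,
   i.e. 0-based rows (t-1)m..tm-1, so level index (0-based) = r %/ m *)
Definition level (m r : nat) : nat := r %/ m.

Definition m_level_placement (m : nat) (B : seq nat)
    (P : {set 'I_(size B) * 'I_(maxh B)}) : bool :=
  [forall c in P, cell_in B c] &&
  [forall c in P, forall d in P,
     (c != d) ==> ((c.1 != d.1) && (level m c.2 != level m d.2))].

Definition rook_num (m k : nat) (B : seq nat) : nat :=
  #|[set P : {set 'I_(size B) * 'I_(maxh B)} |
      m_level_placement m B P && (#|P| == k)]|.

Definition rook_equiv (m : nat) (B1 B2 : seq nat) : Prop :=
  forall k, rook_num m k B1 = rook_num m k B2.

Definition floorm (m o : nat) : nat := (o %/ m) * m.

Definition singleton (m : nat) (B : seq nat) : bool :=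
  [forall i : 'I_(size B),
     ((i.+1 < size B) && (nth 0 B i - floorm m (nth 0 B i) != 0))
       ==> (floorm m (nth 0 B i) < floorm m (nth 0 B i.+1))].

Definition root_vector (m : nat) (B : seq nat) : seq int :=
  [seq ((m * i)%:Z - (nth 0 B i)%:Z)%R | i <- iota 0 (size B)].

Definition edge_move (B1 B2 : seq nat) : Prop :=
  size B1 = size B2 /\
  exists i j k, [/\ (i < size B1)%N, (j < size B1)%N, i <> j & (0 < k)%N] /\
    [/\ nth 0 B1 i = nth 0 B2 i + k, nth 0 B1 j + k = nth 0 B2 j &
    forall l, l <> i -> l <> j -> nth 0 B1 l = nth 0 B2 l].

Definition rook_graph_edge (m : nat) (B1 B2 : seq nat) : Prop :=
  [/\ ferrers B1, ferrers B2, singleton m B1 & singleton m B2] /\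
  rook_equiv m B1 B2 /\ edge_move B1 B2.

(* The m-level analogue of the Goldman-Joichi-White factorization theorem: if every cell of a
   column lies at a level strictly below the complete levels of each later column (as in a
   singleton Ferrers board), then
     \sum_k r_{k,m}(B) x (x - m) ... (x - m (n - k - 1)) = \prod_l (x - xi_l),
   xi being the m-level root vector.  Adding the columns from left to right, the k rooks
   already placed occupy k complete levels of the new column, hence block exactly m k of its
   rows; this produces the new factor x - xi_l.
   So rook equivalent boards give the same product.  Along an edge moving k cells from
   column i to column j, the entries xi_i and xi_j become xi_i + k and xi_j - k and the other
   entries are unchanged.  Evaluating both products beyond all roots and cancelling the common
   factors leaves a b = (a - k) (b + k), so xi_j - xi_i = k: the two entries are swapped, and
   they differ since k > 0. *)

From mathcomp Require Import all_boot all_order all_algebra.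
From mathcomp Require Import zify ring.

Set Implicit Arguments.
Unset Strict Implicit.

Section Placements.

Variable m : nat.
Hypothesis m_gt0 : 0 < m.

(* A placement is read column by column: entry i is [Some r] when the rook of column i
   sits in (0-based) row r, and [None] when column i is empty. *)
Definition rook_levels (s : seq (option nat)) : seq nat := [seq r %/ m | r <- pmap id s].

Definition nrooks (s : seq (option nat)) : nat := count isSome s.

Definition column_choices (b : nat) (s : seq (option nat)) : seq (option nat) :=
  None :: [seq Some r | r <- iota 0 b & r %/ m \notin rook_levels s].

(* Recursion on the reversed board, so that each step appends the rightmost column. *)
Fixpoint placements_rev (cs : seq nat) : seq (seq (option nat)) :=
  if cs is b :: cs' then [seq rcons s o | s <- placements_rev cs', o <- column_choices b s]
  else [:: [::]].

Definition placements (B : seq nat) : seq (seq (option nat)) := placements_rev (rev B).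

Definition is_placement (B : seq nat) (s : seq (option nat)) : Prop :=
  [/\ size s = size B, forall i r, nth None s i = Some r -> r < nth 0 B i
    & uniq (rook_levels s)].

Lemma placements_rcons B b :
  placements (rcons B b) = [seq rcons s o | s <- placements B, o <- column_choices b s].
Proof. by rewrite /placements rev_rcons. Qed.

Lemma rook_levels_rcons s o : rook_levels (rcons s o) = rook_levels s ++ rook_levels [:: o].
Proof. by rewrite /rook_levels -cats1 pmap_cat map_cat. Qed.

Lemma nrooks_rcons s o : nrooks (rcons s o) = nrooks s + isSome o.
Proof. by rewrite /nrooks -cats1 count_cat /= addn0. Qed.

Lemma size_rook_levels s : size (rook_levels s) = nrooks s.
Proof. by rewrite size_map size_pmap. Qed.

Lemma nth_Some_size (T : Type) (s : seq (option T)) i x : nth None s i = Some x -> i < size s.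
Proof. by move=> Ei; rewrite ltnNge; apply/negP => /(nth_default None); rewrite Ei. Qed.

Lemma mem_column_choices b s r :
  (Some r \in column_choices b s) = (r < b) && (r %/ m \notin rook_levels s).
Proof. by rewrite inE /= (mem_map Some_inj) mem_filter mem_iota andbC. Qed.

Lemma is_placement_rcons B b s o :
  is_placement (rcons B b) (rcons s o) <-> is_placement B s /\ o \in column_choices b s.
Proof.
rewrite /is_placement !size_rcons rook_levels_rcons cat_uniq.
split=> [[/succn_inj size_s fit /and3P [uniq_s o_fresh _]] | [[size_s fit uniq_s] o_in]].
  split; first split => // i r Ei.
    by move: (fit i r); rewrite !nth_rcons (nth_Some_size Ei) -size_s (nth_Some_size Ei) => ->.
  case: o fit o_fresh => [r|] fit; last by rewrite inE.
  rewrite /= orbF mem_column_choices => ->; rewrite andbT.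
  by move: (fit (size s) r); rewrite !nth_rcons ltnn eqxx size_s ltnn eqxx; apply.
split; [by rewrite size_s | move=> i r | ].
  rewrite !nth_rcons size_s; case: ifP => _; first exact: fit.
  by case: ifP => // _ Eo; move: o_in; rewrite Eo mem_column_choices => /andP [].
by apply/and3P; split => //; case: o o_in => [r|] //=; rewrite mem_column_choices orbF => /andP [].
Qed.

Lemma mem_placements B s : s \in placements B <-> is_placement B s.
Proof.
elim/last_ind: B s => [|B b IH] s.
  rewrite inE; split; first by move/eqP->; split => // i r; rewrite nth_nil.
  by case=> /size0nil ->.
rewrite placements_rcons; split.
  case/allpairsPdep => s' [o [s'_in o_in ->]].
  by apply/is_placement_rcons; split => //; apply/IH.
case/lastP: s => [|s' o]; first by case; rewrite size_rcons.
by case/is_placement_rcons => /IH s'_in o_in; apply/allpairsPdep; exists s', o.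
Qed.

Lemma uniq_placements B : uniq (placements B).
Proof.
elim/last_ind: B => [|B b IH] //; rewrite placements_rcons.
elim: (placements B) IH => [|s L IHL] //; rewrite cons_uniq => /andP [sL uL].
rewrite allpairs_cons cat_uniq (map_inj_uniq (@rcons_injr _ s)) IHL // andbT.
apply/andP; split.
  rewrite /column_choices /= map_inj_uniq ?filter_uniq ?iota_uniq //; last by move=> ? ? [].
  by rewrite andbT; apply/mapP => [[]].
apply/hasPn => _ /(@allpairsPdep _ (fun _ => option nat : eqType)) [s' [o [Hs' _ ->]]].
by apply/mapP => -[o' _ /rcons_inj [E _]]; move: sL; rewrite -E Hs'.
Qed.

Lemma count_level_eq a b :
  count (fun r => r %/ m == a) (iota 0 b) = minn m (b - a * m).
Proof.
elim: b => [|b IH]; first by rewrite /= minn0.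
rewrite -addn1 iotaD count_cat IH /= addn0 add0n.
have -> : (b %/ m == a) = (a * m <= b < a * m + m).
  by rewrite eqn_leq -ltnS ltn_divLR // leq_divRL // mulSn andbC addnC.
case: (leqP (a * m) b) => H1 /=; case: (ltnP b (a * m + m)) => H2 /=; lia.
Qed.

Lemma count_level_in L b : uniq L -> all (fun a => a < b %/ m) L ->
  count (fun r => r %/ m \in L) (iota 0 b) = m * size L.
Proof.
elim: L => [|a L IH] /=; first by rewrite muln0 count_pred0.
move=> /andP [aL uL] /andP [ab Lb].
rewrite (eq_count (a2 := predU (fun r => r %/ m == a) (fun r => r %/ m \in L))); last first.
  by move=> r; rewrite inE.
have disj : count (predI (fun r => r %/ m == a) (fun r => r %/ m \in L)) (iota 0 b) = 0.
  by apply/eqP; rewrite -leqn0 leqNgt -has_count; apply/hasPn => r _ /=; case: eqP => // ->.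
move: (count_predUI (fun r => r %/ m == a) (fun r => r %/ m \in L) (iota 0 b)).
rewrite disj addn0 => ->; rewrite count_level_eq IH // mulnS.
have : a.+1 * m <= b by rewrite -leq_divRL.
rewrite mulSnr => am_le_b.
by rewrite (minn_idPl _) // leq_subRL // (leq_trans (leq_addr m _) am_le_b).
Qed.

Lemma count_free_rows L b : uniq L -> all (fun a => a < b %/ m) L ->
  count (fun r => r %/ m \notin L) (iota 0 b) = b - m * size L.
Proof.
move=> uL Lb; rewrite -[b in RHS](size_iota 0 b).
by rewrite -(count_predC (fun r => r %/ m \in L)) count_level_in // addKn.
Qed.

Lemma mem_rook_levels a s :
  reflect (exists j r, nth None s j = Some r /\ a = r %/ m) (a \in rook_levels s).
Proof.
apply: (iffP mapP) => [[r] | [j [r [Ej ->]]]].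
  by rewrite mem_pmap map_id => /(nthP None) [j _ Ej] ->; exists j, r.
by exists r => //; rewrite mem_pmap map_id -Ej mem_nth // (nth_Some_size Ej).
Qed.

Lemma uniq_rook_levelsP s : uniq (rook_levels s) <->
  (forall i j a b, i != j -> nth None s i = Some a -> nth None s j = Some b -> a %/ m != b %/ m).
Proof.
elim: s => [|[a0|] s IH]; first by split => // _ i j a b _; rewrite nth_nil.
  rewrite [rook_levels _]/= cons_uniq; split.
    case/andP => /mem_rook_levels a0_fresh /IH uniq_s [|i] [|j] a b //= ij.
    - by move=> [<-] Ej; apply/eqP => E; apply: a0_fresh; exists j, b.
    - by move=> Ei [<-]; apply/eqP => E; apply: a0_fresh; exists i, a.
    - exact: uniq_s.
  move=> H; apply/andP; split; last by apply/IH => i j a b ij; apply: (H i.+1 j.+1).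
  apply/mem_rook_levels => -[j [r [Ej E]]].
  by move: (H 0 j.+1 a0 r erefl erefl Ej); rewrite E eqxx.
rewrite [rook_levels _]/=; split; first by move/IH => uniq_s [|i] [|j] a b //; exact: (uniq_s i j).
by move=> H; apply/IH => i j a b ij; apply: (H i.+1 j.+1).
Qed.

Lemma nth_leq_maxh B i : nth 0 B i <= maxh B.
Proof.
elim: B i => [|a B IH] [|i] //=; first exact: leq_maxl.
exact: leq_trans (IH i) (leq_maxr _ _).
Qed.

Definition placement_set (B : seq nat) (s : seq (option nat)) : {set 'I_(size B) * 'I_(maxh B)} :=
  [set c : 'I_(size B) * 'I_(maxh B) | nth None s c.1 == Some (val c.2)].

Definition column_rows B (P : {set 'I_(size B) * 'I_(maxh B)}) : seq (option nat) :=
  [seq omap (fun c : 'I_(size B) * 'I_(maxh B) => val c.2) [pick c in P | val c.1 == i]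
  | i <- iota 0 (size B)].

Lemma is_placement_nth B s i r : is_placement B s -> nth None s i = Some r ->
  i < size B /\ r < maxh B.
Proof.
case=> size_s fit _ Ei; split; last exact: leq_trans (fit _ _ Ei) (nth_leq_maxh B i).
by rewrite -size_s (nth_Some_size Ei).
Qed.

Lemma placement_set_level_placement B s :
  is_placement B s -> m_level_placement m B (placement_set B s).
Proof.
case=> _ fit /uniq_rook_levelsP levels_s; apply/andP; split.
  by apply/forallP => c; apply/implyP; rewrite inE => /eqP /fit.
apply/forallP => c; apply/implyP; rewrite inE => /eqP Ec.
apply/forallP => d; apply/implyP; rewrite inE => /eqP Ed.
apply/implyP => cd; have c1d1 : c.1 != d.1.
  apply: contra cd => /eqP E; move: Ed; rewrite -E Ec => -[/val_inj E2].
  by case: c d E E2 {Ec} => c1 c2 [d1 d2] /= -> ->.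
by rewrite c1d1; apply: (levels_s c.1 d.1).
Qed.

Lemma card_placement_set B s : is_placement B s -> #|placement_set B s| = nrooks s.
Proof.
move=> Ps; have [size_s _ _] := Ps.
rewrite -sum1_card.
transitivity (\sum_(i < size B) \sum_(j < maxh B | nth None s i == Some (val j)) 1).
  by rewrite pair_big_dep; apply: eq_bigl => c; rewrite inE.
transitivity (\sum_(i < size B) isSome (nth None s i)).
  apply: eq_bigr => i _; case E: (nth None s i) => [r|]; last by rewrite big_pred0.
  have [_ r_lt] := is_placement_nth Ps E.
  by rewrite (big_pred1 (Ordinal r_lt)) // => j; rewrite /= -val_eqE.
rewrite /nrooks -sum1_count big_mkcond (big_nth None) size_s big_mkord [RHS]big_mkcond.
by apply: eq_bigr => i _; case: (nth None s i).
Qed.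

Lemma placement_set_inj B s1 s2 : is_placement B s1 -> is_placement B s2 ->
  placement_set B s1 = placement_set B s2 -> s1 = s2.
Proof.
have sub t1 t2 : is_placement B t1 -> placement_set B t1 = placement_set B t2 ->
    forall i r, nth None t1 i = Some r -> nth None t2 i = Some r.
  move=> Pt1 E i r Ei; have [i_lt r_lt] := is_placement_nth Pt1 Ei.
  have : (Ordinal i_lt, Ordinal r_lt) \in placement_set B t1 by rewrite inE /= Ei.
  by rewrite E inE /= => /eqP.
move=> P1 P2 E; have [size1 _ _] := P1; have [size2 _ _] := P2.
apply: (@eq_from_nth _ None); first by rewrite size1 size2.
move=> i _; case E1: (nth None s1 i) => [r|]; first by rewrite (sub _ _ P1 E i r E1).
case E2: (nth None s2 i) => [r|] //.
by rewrite (sub _ _ P2 (esym E) i r E2) in E1.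
Qed.

Lemma column_rowsK B P : m_level_placement m B P ->
  is_placement B (column_rows P) /\ placement_set B (column_rows P) = P.
Proof.
case/andP => /forallP cells_P /forallP distinct_P.
have distinct c d : c \in P -> d \in P -> c != d ->
    (c.1 != d.1) && (level m c.2 != level m d.2).
  by move=> cP dP; move/implyP/(_ cP)/forallP/(_ d)/implyP/(_ dP)/implyP: (distinct_P c).
have nth_rows i : i < size B -> nth None (column_rows P) i =
    omap (fun c : 'I_(size B) * 'I_(maxh B) => val c.2) [pick c in P | val c.1 == i].
  by move=> i_lt; rewrite (nth_map 0) ?size_iota // nth_iota.
have rows_cell i r : nth None (column_rows P) i = Some r ->
    exists2 c, c \in P & (val c.1 = i /\ val c.2 = r).
  case: (ltnP i (size B)) => i_lt; last by rewrite nth_default // size_map size_iota.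
  by rewrite nth_rows //; case: pickP => // c /andP [cP /eqP <-] [<-]; exists c.
split; first split.
- by rewrite size_map size_iota.
- by move=> i r /rows_cell [c cP [<- <-]]; apply: (implyP (cells_P c)).
- apply/uniq_rook_levelsP => i j a b ij /rows_cell [c cP [Ec Ea]] /rows_cell [d dP [Ed Eb]].
  have cd : c != d by apply: contra ij => /eqP cd; rewrite -Ec -Ed cd.
  by move: (distinct c d cP dP cd); rewrite /level Ea Eb => /andP [].
apply/setP => c; rewrite inE nth_rows //.
case: pickP => [d /andP [dP /eqP Edc] | noP] /=; last first.
  by apply/esym/negbTE/negP => cP; move: (noP c); rewrite cP eqxx.
apply/eqP/idP => [[Ed2] | cP].
  suff -> : c = d by [].
  by case: c d Edc Ed2 {dP} => c1 c2 [d1 d2] /= /val_inj -> /val_inj ->.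
case: (eqVneq c d) => [-> // | cd].
by move: (distinct c d cP dP cd); rewrite -(inj_eq val_inj) Edc eqxx.
Qed.

Lemma rook_num_count k B : rook_num m k B = count (fun s => nrooks s == k) (placements B).
Proof.
rewrite /rook_num; set L := filter (fun s => nrooks s == k) (placements B).
have PL s : s \in L -> is_placement B s.
  by rewrite mem_filter => /andP [_ /mem_placements].
have -> : [set P | m_level_placement m B P && (#|P| == k)] = [set P in map (placement_set B) L].
  apply/setP => P; rewrite !inE; apply/idP/idP.
    case/andP => PP /eqP card_P; have [Ps rowsK] := column_rowsK PP.
    rewrite -rowsK; apply: map_f.
    by rewrite mem_filter -(card_placement_set Ps) rowsK card_P eqxx; apply/mem_placements.
  case/mapP => s sL ->; have Ps := PL s sL.
  rewrite placement_set_level_placement // card_placement_set //.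
  by move: sL; rewrite mem_filter => /andP [].
rewrite cardsE (card_uniqP _) ?size_map ?size_filter //.
rewrite map_inj_in_uniq ?filter_uniq ?uniq_placements //.
by move=> s1 s2 /PL P1 /PL P2; apply: placement_set_inj.
Qed.

Definition levels_below (B : seq nat) (b : nat) : Prop :=
  forall i r, i < size B -> r < nth 0 B i -> r %/ m < b %/ m.

Lemma rook_levels_lt B s b : is_placement B s -> levels_below B b ->
  all (fun a => a < b %/ m) (rook_levels s).
Proof.
move=> Ps lt_b; apply/allP => a /mem_rook_levels [j [r [Ej ->]]].
have [_ fit _] := Ps; move/(_ j r Ej): fit => r_lt.
by apply: lt_b r_lt; have [] := is_placement_nth Ps Ej.
Qed.

End Placements.

Section LevelSeparated.

Variable m : nat.
Hypothesis m_gt0 : 0 < m.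

Definition level_separated (B : seq nat) : Prop := forall i j r,
  i < j < size B -> r < nth 0 B i -> r %/ m < nth 0 B j %/ m.

Lemma level_separated_rcons B b : level_separated (rcons B b) ->
  level_separated B /\ levels_below m B b.
Proof.
move=> sep; split=> [i j r /andP [lt_ij lt_j] | i r lt_i].
  have := sep i j r; rewrite !nth_rcons lt_j (ltn_trans lt_ij lt_j) size_rcons; apply.
  by rewrite lt_ij ltnS ltnW.
have := sep i (size B) r; rewrite !nth_rcons lt_i ltnn eqxx size_rcons; apply.
by rewrite ltnSn.
Qed.

Lemma singleton_level_separated B : ferrers B -> singleton m B -> level_separated B.
Proof.
move=> sorted_B single_B i j r /andP [lt_ij lt_j] lt_r.
have lt_i : i < size B := ltn_trans lt_ij lt_j.
have mono a c : a <= c < size B -> nth 0 B a <= nth 0 B c.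
  case/andP => le_ac lt_c; apply: (sorted_leq_nth leq_trans leqnn 0 sorted_B) => //.
  by rewrite inE (leq_ltn_trans le_ac lt_c).
have le_levels a c : a <= c < size B -> nth 0 B a %/ m <= nth 0 B c %/ m.
  by move/mono; apply: leq_div2r.
have [mod0 | mod_neq0] := eqVneq (nth 0 B i %% m) 0.
  apply: leq_trans (le_levels i j _); last by rewrite (ltnW lt_ij).
  by rewrite ltn_divLR //; move: lt_r; rewrite {1}(divn_eq (nth 0 B i) m) mod0 addn0.
(* a partial top level in column i forces a new level in column i+1 *)
have lt_next : nth 0 B i %/ m < nth 0 B i.+1 %/ m.
  have lt_i1 : i.+1 < size B := leq_ltn_trans lt_ij lt_j.
  move/forallP/(_ (Ordinal lt_i)): single_B; rewrite /= lt_i1 /floorm ltn_pmul2r //.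
  by move/implyP; apply; rewrite {1}(divn_eq (nth 0 B i) m) addKn.
apply: leq_ltn_trans (leq_div2r m (ltnW lt_r)) (leq_trans lt_next (le_levels _ _ _)).
by rewrite lt_ij lt_j.
Qed.

End LevelSeparated.

Import Order.TTheory GRing.Theory Num.Theory.
Local Open Scope ring_scope.

Lemma sum_count_fibers (T : Type) (R : nmodType) (L : seq T) (h : T -> nat) (g : nat -> R) n :
  all (fun s => h s < n)%N L ->
  \sum_(s <- L) g (h s) = \sum_(k < n) g k *+ count (fun s => h s == k) L.
Proof.
elim: L => [_|a L IH /andP [lt_a lt_L]]; first by rewrite big_nil big1.
rewrite big_cons IH //=; under [RHS]eq_bigr do rewrite mulrnDr.
rewrite big_split /=; congr (_ + _).
rewrite (bigD1 (Ordinal lt_a)) //= eqxx big1 ?addr0 // => k ne_k.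
by move: ne_k; rewrite -val_eqE /= eq_sym => /negbTE ->.
Qed.

Lemma nth_root_vector m B l : (l < size B)%N ->
  nth 0 (root_vector m B) l = (m * l)%N%:Z - (nth 0 B l)%:Z.
Proof. by move=> lt_l; rewrite (nth_map 0%N) ?size_iota // nth_iota. Qed.

Section Factorization.

Variable m : nat.
Hypothesis m_gt0 : (0 < m)%N.

Definition mfalling (x : int) (j : nat) : int := \prod_(i < j) (x - (m * i)%N%:Z).

Definition rook_sum (x : int) (B : seq nat) : int :=
  \sum_(s <- placements m B) mfalling x (size B - nrooks s).

Lemma rook_sum_rcons x B b : levels_below m B b ->
  rook_sum x (rcons B b) = rook_sum x B * (x + b%:Z - (m * size B)%N%:Z).
Proof.
move=> lt_b; rewrite /rook_sum placements_rcons big_allpairs_dep big_distrl /=.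
apply: eq_big_seq => s /mem_placements Ps; have [size_s _ uniq_s] := Ps.
have levels_lt := rook_levels_lt Ps lt_b.
have le_k : (nrooks s <= size B)%N by rewrite -size_s count_size.
have le_mk : (m * nrooks s <= b)%N.
  rewrite -(size_rook_levels m) -(count_level_in m_gt0 uniq_s levels_lt).
  by rewrite -[X in (_ <= X)%N](size_iota 0 b) count_size.
rewrite /column_choices big_cons big_map size_rcons nrooks_rcons addn0.
under eq_bigr do rewrite nrooks_rcons addn1 subSS.
rewrite big_const_seq count_predT size_filter count_free_rows // size_rook_levels.
rewrite iter_addr_0 subSn // /mfalling big_ord_recr /= -mulr_natr -mulrDr; congr (_ * _).
rewrite natz mulnBr -!subzn //; last by rewrite leq_mul2l le_k orbT.
lia.
Qed.

Lemma rook_sum_prod x B : level_separated m B ->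
  rook_sum x B = \prod_(l < size B) (x + (nth 0 B l)%:Z - (m * l)%N%:Z).
Proof.
elim/last_ind: B => [_|B b IH /level_separated_rcons [sep_B lt_b]].
  by rewrite /rook_sum big_seq1 /mfalling !big_ord0.
rewrite rook_sum_rcons // IH // size_rcons big_ord_recr /= nth_rcons ltnn eqxx.
by congr (_ * _); apply: eq_bigr => l _; rewrite nth_rcons ltn_ord.
Qed.

Lemma rook_sum_rook_num x B :
  rook_sum x B = \sum_(k < (size B).+1) mfalling x (size B - k) *+ rook_num m k B.
Proof.
rewrite /rook_sum (@sum_count_fibers _ _ _ nrooks (fun k => mfalling x (size B - k)) (size B).+1).
  by apply: eq_bigr => k _; rewrite rook_num_count.
apply/allP => s /mem_placements [size_s _ _]; rewrite ltnS -size_s; exact: count_size.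
Qed.

Theorem rook_factorization x B : level_separated m B ->
  \sum_(k < (size B).+1) mfalling x (size B - k) *+ rook_num m k B =
  \prod_(l < size B) (x - nth 0 (root_vector m B) l).
Proof.
move=> sep_B; rewrite -rook_sum_rook_num rook_sum_prod //.
by apply: eq_bigr => l _; rewrite nth_root_vector // opprB addrA.
Qed.

End Factorization.

Lemma mul_shifted_factors_eq (R : idomainType) (x c d k : R) : k != 0 ->
  (x - c) * (x - d) = (x - (c + k)) * (x - (d - k)) -> d - c = k.
Proof.
move=> nz_k E; have : k * (d - c - k) = 0.
  by rewrite -[RHS](subrr ((x - c) * (x - d))) {1}E; ring.
by move/eqP; rewrite mulf_eq0 (negbTE nz_k) subr_eq0 => /eqP.
Qed.

Lemma root_shift_of_prod_eq (R : realDomainType) (u v : seq R) n i j k :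
  (i < n)%N -> (j < n)%N -> i != j -> k != 0 ->
  nth 0 v i = nth 0 u i + k -> nth 0 v j = nth 0 u j - k ->
  (forall l, l != i -> l != j -> nth 0 v l = nth 0 u l) ->
  (forall x, \prod_(l < n) (x - nth 0 u l) = \prod_(l < n) (x - nth 0 v l)) ->
  nth 0 u j - nth 0 u i = k.
Proof.
move=> lt_i lt_j ne_ij nz_k v_i v_j v_l prod_eq.
(* evaluate at a point beyond every root of u, where no other factor vanishes *)
set x := 1 + \sum_(l < n) `|nth 0 u l|.
have u_lt_x (l : 'I_n) : nth 0 u l < x.
  rewrite /x (bigD1 l) //= addrCA; apply: le_lt_trans (ler_norm _) _.
  by rewrite ltrDl ltr_pwDl // sumr_ge0.
pose rest w := \prod_(l < n | (val l != i) && (val l != j)) (x - nth 0 w l).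
have split_ij w : \prod_(l < n) (x - nth 0 w l) = (x - nth 0 w i) * (x - nth 0 w j) * rest w.
  rewrite (bigD1 (Ordinal lt_i)) //= (bigD1 (Ordinal lt_j)) /= ?mulrA //.
  by rewrite -val_eqE /= eq_sym.
have rest_eq : rest v = rest u by apply: eq_bigr => l /andP [l_i l_j]; rewrite v_l.
have rest_neq0 : rest u != 0 by rewrite gt_eqF // prodr_gt0 // => l _; rewrite subr_gt0.
move: (prod_eq x); rewrite !split_ij rest_eq v_i v_j => /(mulIf rest_neq0).
exact: mul_shifted_factors_eq.
Qed.

Lemma edge_move_root_vector m B1 B2 i j k : size B1 = size B2 ->
  (i < size B1)%N -> (j < size B1)%N ->
  nth 0 B1 i = (nth 0 B2 i + k)%N -> (nth 0 B1 j + k)%N = nth 0 B2 j ->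
  (forall l, l <> i -> l <> j -> nth 0 B1 l = nth 0 B2 l) ->
  [/\ nth 0 (root_vector m B2) i = nth 0 (root_vector m B1) i + k%:Z,
      nth 0 (root_vector m B2) j = nth 0 (root_vector m B1) j - k%:Z &
      forall l, l != i -> l != j -> nth 0 (root_vector m B2) l = nth 0 (root_vector m B1) l].
Proof.
move=> size12 lt_i lt_j E_i E_j E_l.
rewrite !nth_root_vector -?size12 // E_i -E_j !PoszD; split; try ring.
move=> l /eqP l_i /eqP l_j; have [lt_l | ge_l] := ltnP l (size B1).
  by rewrite !nth_root_vector -?size12 // E_l.
by rewrite !nth_default ?size_map ?size_iota -?size12.
Qed.

Lemma transposition_witness (T : eqType) (x0 : T) (u v : seq T) n i j :
  (i < n)%N -> (j < n)%N -> i != j -> nth x0 u i != nth x0 u j ->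
  nth x0 v i = nth x0 u j -> nth x0 v j = nth x0 u i ->
  (forall l, l != i -> l != j -> nth x0 v l = nth x0 u l) ->
  exists i1 i2 : nat,
    [/\ (i1 < i2 < n)%N, nth x0 u i1 != nth x0 u i2 &
        forall l, (l < n)%N ->
          nth x0 v l = nth x0 u (if l == i1 then i2 else if l == i2 then i1 else l)].
Proof.
move=> lt_i lt_j ne_ij; wlog lt_ij : i j lt_i lt_j ne_ij / (i < j)%N => [sym|].
  have := ne_ij; rewrite neq_ltn => /orP [lt_ij | lt_ji]; first exact: sym.
  move=> ne_u v_i v_j v_l; apply: (sym j i); rewrite 1?eq_sym //.
  by move=> l l_j l_i; apply: v_l.
move=> ne_u v_i v_j v_l; exists i, j; split=> [|//|l _]; first by rewrite lt_ij.
by case: eqVneq => [->|l_i] //; case: eqVneq => [->|l_j] //; apply: v_l.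
Qed.

Lemma rook_equiv_root_prod m B1 B2 x : (0 < m)%N ->
  level_separated m B1 -> level_separated m B2 ->
  rook_equiv m B1 B2 -> size B1 = size B2 ->
  \prod_(l < size B1) (x - nth 0 (root_vector m B1) l) =
  \prod_(l < size B1) (x - nth 0 (root_vector m B2) l).
Proof.
move=> m_gt0 sep1 sep2 equiv size12.
rewrite -(rook_factorization m_gt0 x sep1) size12 -(rook_factorization m_gt0 x sep2).
by apply: eq_bigr => k _; rewrite equiv.
Qed.

Theorem theorem17 (m n : nat) (B1 B2 : seq nat) :
  (0 < m)%N -> size B1 = n -> size B2 = n ->
  rook_graph_edge m B1 B2 ->
  exists i1 i2 : nat,
    [/\ (i1 < i2 < n)%N,
        nth 0%R (root_vector m B1) i1 != nth 0%R (root_vector m B1) i2 &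
        forall l, (l < n)%N ->
          nth 0%R (root_vector m B2) l =
          nth 0%R (root_vector m B1)
            (if l == i1 then i2 else if l == i2 then i1 else l)].
Proof.
move=> m_gt0 size1 _ [[ferrers1 ferrers2 single1 single2] [equiv edge]].
case: edge => size12 [i [j [k [[lt_i lt_j /eqP ne_ij k_gt0] [E_i E_j E_l]]]]].
have sep1 := singleton_level_separated m_gt0 ferrers1 single1.
have sep2 := singleton_level_separated m_gt0 ferrers2 single2.
have [v_i v_j v_l] := edge_move_root_vector m size12 lt_i lt_j E_i E_j E_l.
have gap : nth 0 (root_vector m B1) j - nth 0 (root_vector m B1) i = k%:Z.
  apply: (root_shift_of_prod_eq lt_i lt_j ne_ij _ v_i v_j v_l); first by rewrite -lt0n.
  by move=> x; apply: rook_equiv_root_prod.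
rewrite -size1; apply: (transposition_witness lt_i lt_j ne_ij _ _ _ v_l).
- by apply/eqP => u_ij; move: gap; rewrite u_ij subrr; lia.
- by rewrite v_i -gap addrC subrK.
- by rewrite v_j -gap opprB addrC subrK.
Qed.
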